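(* Let $2\le j<k$ be integers and $g_k(x,y)=(1+x+y)^k-ky-\bigl((1+x)^k-1\bigr)$. For $n$ a multiple of $k$ and integers $a,b\ge 0$ with $a+b\le n$, define $$E_{n,j,k}\!\left(\tfrac an,\tfrac bn\right)=\frac{\binom{n}{a,\,b,\,n-a-b}\,S_{n,j,k}(a,b)}{\binom{nj}{ja,\,jb,\,j(n-a-b)}},\qquad S_{n,j,k}(a,b)=\operatorname{coeff}\!\left(g_k(x,y)^{nj/k},\,x^{ja}y^{jb}\right).$$ Let $\alpha,\beta>0$ with $\alpha+\beta<1$, and let $(n,a_n,b_n)$ range over sequences with $n\to\infty$ through multiples of $k$ and $a_n/n\to\alpha$, $b_n/n\to\beta$. Then for all $x,y>0$, $$\limsup_{n\to\infty}\frac1n\ln E_{n,j,k}\!\left(\tfrac{a_n}{n},\tfrac{b_n}{n}\right)\le \frac{j}{k}\ln\frac{1+(1+x+y)^k-ky-(1+x)^k}{x^{k\alpha}y^{k\beta}}+(1-j)\,h(\alpha,\beta,1-\alpha-\beta),$$ where $h(p,q,r)=-p\ln p-q\ln q-r\ln r$.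
   Context: $E_{n,j,k}(a/n,b/n)$ is the average number of LM1 stopping sets in a random $(j,k)$-regular LDPC code of length $n$ with $a$ correct (unverified, correctly received) and $b$ incorrect variable nodes, the rest being verified; $g_k(x,y)$ enumerates the edge patterns at a single degree-$k$ check node that prevent LM1 decoding progress ($1$ marks a verified edge, $x$ a correct edge, $y$ an incorrect edge). $\operatorname{coeff}(f,x^py^q)$ denotes the coefficient of $x^py^q$ in the polynomial $f$. *)

From Stdlib Require Import Reals Arith.
Open Scope R_scope.

Definition multinom3 (a b c : nat) : R :=
  INR (fact (a + b + c)) / (INR (fact a) * INR (fact b) * INR (fact c)).

(* coefficient of x^s y^t in g_k(x,y) = (1+x+y)^k - k y - ((1+x)^k - 1) *)
Definition gcoef (k s t : nat) : R :=
  (if (s + t <=? k)%nat then multinom3 s t (k - s - t) else 0)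
  - (if (Nat.eqb s 0 && Nat.eqb t 1)%bool then INR k else 0)
  - (if (Nat.eqb t 0 && (1 <=? s)%nat && (s <=? k)%nat)%bool
     then INR (fact k) / (INR (fact s) * INR (fact (k - s))) else 0).

(* coefficient of x^p y^q in f^m, where f is the bivariate polynomial with
   coefficient c s t at x^s y^t (polynomial multiplication written out) *)
Fixpoint pcoef (c : nat -> nat -> R) (m p q : nat) : R :=
  match m with
  | O => if (Nat.eqb p 0 && Nat.eqb q 0)%bool then 1 else 0
  | S m' => sum_f_R0 (fun s =>
              sum_f_R0 (fun t => c s t * pcoef c m' (p - s) (q - t)) q) p
  end.

Definition Snjk (n j k a b : nat) : R :=
  pcoef (gcoef k) (n * j / k) (j * a) (j * b).

Definition Enjk (n j k a b : nat) : R :=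
  multinom3 a b (n - a - b) * Snjk n j k a b
  / multinom3 (j * a) (j * b) (j * (n - a - b)).

Definition hent (p q r : R) : R := - p * ln p - q * ln q - r * ln r.

From Stdlib Require Import Reals Arith Lra Lia Bool.
Open Scope R_scope.

(* The proof is a saddle-point (Chernoff) bound combined with Stirling's
   formula.  Since every coefficient of g_k is nonnegative, for any x, y > 0

       coeff(g_k^m, x^p y^q) * x^p y^q <= g_k(x,y)^m,

   and g_k(x,y) = 1 + (1+x+y)^k - k y - (1+x)^k =: G_k(x,y).  On the other hand
   ln m! = m ln m - m + O(ln m), so the logarithms of the two multinomial
   coefficients in E are, up to O(ln n), the "entropy counts"
   n h(a/n, b/n, c/n) and j n h(a/n, b/n, c/n).  Together this gives, for each
   single n, the explicit estimate [ln_Enjk_le]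

       (1/n) ln E <= (j/k) ln G_k(x,y) + main_rate(a/n, b/n) + O(ln n / n),

   where main_rate is the right-hand side of the theorem without the G_k term.
   The theorem follows by continuity of main_rate and because the error term
   tends to 0. *)

Lemma sum_single (f : nat -> R) (i n : nat) :
  (i <= n)%nat -> (forall t, t <> i -> f t = 0) -> sum_f_R0 f n = f i.
Proof.
  intros Hin Hf. induction n as [|n IH].
  - assert (i = 0%nat) by lia. subst. reflexivity.
  - simpl. destruct (Nat.eq_dec i (S n)) as [->|Hne].
    + rewrite sum_eq_R0 by (intros; apply Hf; lia). lra.
    + rewrite IH by lia. rewrite (Hf (S n)) by lia. lra.
Qed.

Lemma sum_ext_zero (f : nat -> R) (n m : nat) :
  (forall t, (n < t)%nat -> f t = 0) -> (n <= m)%nat -> sum_f_R0 f m = sum_f_R0 f n.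
Proof.
  intros Hf Hnm. induction m as [|m IH].
  - assert (n = 0%nat) by lia. subst. reflexivity.
  - destruct (Nat.eq_dec n (S m)) as [->|Hne]; [reflexivity|].
    simpl. rewrite IH by lia. rewrite Hf by lia. lra.
Qed.

Lemma sum_le_trunc (f : nat -> R) (p k : nat) :
  (forall t, 0 <= f t) -> (forall t, (k < t)%nat -> f t = 0) ->
  sum_f_R0 f p <= sum_f_R0 f k.
Proof.
  intros Hpos Hz. destruct (le_lt_dec p k) as [Hpk|Hkp].
  - clear Hz. induction k as [|k IH].
    + assert (p = 0%nat) by lia. subst. lra.
    + destruct (Nat.eq_dec p (S k)) as [->|Hne]; [lra|].
      simpl. specialize (IH ltac:(lia)). specialize (Hpos (S k)). lra.
  - rewrite (sum_ext_zero f k p); [lra|exact Hz|lia].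
Qed.

Lemma sum_mult_r (f : nat -> R) (n : nat) (a : R) :
  sum_f_R0 f n * a = sum_f_R0 (fun i => f i * a) n.
Proof. rewrite Rmult_comm, scal_sum. reflexivity. Qed.

Section CoefficientBound.

Variable c : nat -> nat -> R.
Variable k : nat.
Hypothesis c_nonneg : forall s t, 0 <= c s t.
Hypothesis c_vanish_s : forall s t, (k < s)%nat -> c s t = 0.
Hypothesis c_vanish_t : forall s t, (k < t)%nat -> c s t = 0.

Definition peval (x y : R) : R :=
  sum_f_R0 (fun s => sum_f_R0 (fun t => c s t * x ^ s * y ^ t) k) k.

Lemma monomial_nonneg (x y : R) (s t : nat) :
  0 <= x -> 0 <= y -> 0 <= c s t * x ^ s * y ^ t.
Proof.
  intros hx hy. apply Rmult_le_pos; [apply Rmult_le_pos|]; auto using pow_le.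
Qed.

Lemma peval_nonneg (x y : R) : 0 <= x -> 0 <= y -> 0 <= peval x y.
Proof.
  intros hx hy. apply cond_pos_sum; intro s. apply cond_pos_sum; intro t.
  apply monomial_nonneg; auto.
Qed.

Lemma pcoef_nonneg (m p q : nat) : 0 <= pcoef c m p q.
Proof.
  revert p q. induction m as [|m IH]; intros p q; simpl.
  - destruct (Nat.eqb p 0 && Nat.eqb q 0)%bool; lra.
  - apply cond_pos_sum; intro s. apply cond_pos_sum; intro t.
    apply Rmult_le_pos; auto.
Qed.

Lemma partial_eval_le (x y : R) (p q : nat) : 0 <= x -> 0 <= y ->
  sum_f_R0 (fun s => sum_f_R0 (fun t => c s t * x ^ s * y ^ t) q) p <= peval x y.
Proof.
  intros hx hy. unfold peval.
  apply Rle_trans with (sum_f_R0 (fun s => sum_f_R0 (fun t => c s t * x ^ s * y ^ t) k) p).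
  - apply sum_Rle; intros s _. apply sum_le_trunc.
    + intro t. apply monomial_nonneg; auto.
    + intros t Ht. rewrite c_vanish_t by exact Ht. ring.
  - apply sum_le_trunc.
    + intro s. apply cond_pos_sum. intro t. apply monomial_nonneg; auto.
    + intros s Hs. apply sum_eq_R0. intros t _. rewrite c_vanish_s by exact Hs. ring.
Qed.

Lemma pcoef_bound (x y : R) (m p q : nat) : 0 < x -> 0 < y ->
  pcoef c m p q * x ^ p * y ^ q <= peval x y ^ m.
Proof.
  intros hx hy. revert p q. induction m as [|m IH]; intros p q.
  - simpl. destruct (Nat.eqb p 0) eqn:Ep; destruct (Nat.eqb q 0) eqn:Eq; simpl;
      try (rewrite !Rmult_0_l; lra).
    apply Nat.eqb_eq in Ep, Eq. subst. simpl. lra.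
  - assert (Hpow : 0 <= peval x y ^ m) by (apply pow_le, peval_nonneg; lra).
    simpl pcoef. rewrite !sum_mult_r.
    apply Rle_trans with (sum_f_R0 (fun s => sum_f_R0
      (fun t => c s t * x ^ s * y ^ t) q) p * peval x y ^ m).
    + rewrite sum_mult_r. apply sum_Rle; intros s Hs.
      rewrite !sum_mult_r. apply sum_Rle; intros t Ht.
      assert (Ex : x ^ p = x ^ s * x ^ (p - s)) by (rewrite <- pow_add; f_equal; lia).
      assert (Ey : y ^ q = y ^ t * y ^ (q - t)) by (rewrite <- pow_add; f_equal; lia).
      rewrite Ex, Ey.
      replace (c s t * pcoef c m (p - s) (q - t) * (x ^ s * x ^ (p - s)) * (y ^ t * y ^ (q - t)))
        with (c s t * x ^ s * y ^ t * (pcoef c m (p - s) (q - t) * x ^ (p - s) * y ^ (q - t)))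
        by ring.
      apply Rmult_le_compat_l; [apply monomial_nonneg; lra|apply IH].
    + simpl.
      apply Rmult_le_compat_r; [exact Hpow|apply partial_eval_le; lra].
Qed.

End CoefficientBound.

Lemma multinom3_pos (a b c : nat) : 0 < multinom3 a b c.
Proof.
  unfold multinom3. pose proof (INR_fact_lt_0 (a + b + c)). pose proof (INR_fact_lt_0 a).
  pose proof (INR_fact_lt_0 b). pose proof (INR_fact_lt_0 c).
  apply Rdiv_lt_0_compat; [lra|]. repeat apply Rmult_lt_0_compat; lra.
Qed.

Lemma multinom3_binom (k s : nat) : (s <= k)%nat ->
  multinom3 s 0 (k - s) = INR (fact k) / (INR (fact s) * INR (fact (k - s))).
Proof.
  intros H. unfold multinom3. replace (s + 0 + (k - s))%nat with k by lia.
  simpl (fact 0). simpl (INR 1). rewrite Rmult_1_r. reflexivity.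
Qed.

Lemma multinom3_0_1 (k : nat) : (1 <= k)%nat -> multinom3 0 1 (k - 0 - 1) = INR k.
Proof.
  intros Hk. destruct k as [|k']; [lia|]. unfold multinom3.
  replace (0 + 1 + (S k' - 0 - 1))%nat with (S k') by lia.
  replace (S k' - 0 - 1)%nat with k' by lia.
  rewrite fact_simpl, mult_INR. simpl (fact 0). simpl (fact 1). simpl (INR 1).
  pose proof (INR_fact_lt_0 k'). field. lra.
Qed.

Lemma binom_mult_multinom3 (k s t : nat) : (s + t <= k)%nat ->
  C k s * C (k - s) t = multinom3 s t (k - s - t).
Proof.
  intros H. unfold C, multinom3. replace (s + t + (k - s - t))%nat with k by lia.
  pose proof (INR_fact_lt_0 k). pose proof (INR_fact_lt_0 s).
  pose proof (INR_fact_lt_0 t). pose proof (INR_fact_lt_0 (k - s)).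
  pose proof (INR_fact_lt_0 (k - s - t)).
  field. repeat split; lra.
Qed.

(* The subtracted terms ky and (1+x)^k - 1 cancel exactly against monomials of
   (1+x+y)^k, so all coefficients of g_k are nonnegative. *)
Lemma gcoef_nonneg (k s t : nat) : (1 <= k)%nat -> 0 <= gcoef k s t.
Proof.
  intros Hk. unfold gcoef.
  destruct (Nat.eqb s 0) eqn:Es; destruct (Nat.eqb t 0) eqn:Et;
  destruct (Nat.eqb t 1) eqn:Et1; destruct (1 <=? s)%nat eqn:E1s;
  destruct (s <=? k)%nat eqn:Esk; destruct (s + t <=? k)%nat eqn:Est; simpl;
  apply Nat.eqb_eq in Es || apply Nat.eqb_neq in Es;
  apply Nat.eqb_eq in Et || apply Nat.eqb_neq in Et;
  apply Nat.eqb_eq in Et1 || apply Nat.eqb_neq in Et1;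
  apply Nat.leb_le in E1s || apply Nat.leb_gt in E1s;
  apply Nat.leb_le in Esk || apply Nat.leb_gt in Esk;
  apply Nat.leb_le in Est || apply Nat.leb_gt in Est;
  try (exfalso; lia);
  try (pose proof (multinom3_pos s t (k - s - t)); lra).
  - subst. rewrite multinom3_0_1 by lia. lra.
  - subst. replace (k - s - 0)%nat with (k - s)%nat by lia.
    rewrite multinom3_binom by lia. lra.
Qed.

Lemma gcoef_vanish_s (k s t : nat) : (k < s)%nat -> gcoef k s t = 0.
Proof.
  intros H. unfold gcoef.
  replace (s + t <=? k)%nat with false by (symmetry; apply Nat.leb_gt; lia).
  replace (Nat.eqb s 0) with false by (symmetry; apply Nat.eqb_neq; lia).
  replace (s <=? k)%nat with false by (symmetry; apply Nat.leb_gt; lia).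
  simpl. rewrite andb_false_r. lra.
Qed.

Lemma gcoef_vanish_t (k s t : nat) : (1 <= k)%nat -> (k < t)%nat -> gcoef k s t = 0.
Proof.
  intros Hk H. unfold gcoef.
  replace (s + t <=? k)%nat with false by (symmetry; apply Nat.leb_gt; lia).
  replace (Nat.eqb t 1) with false by (symmetry; apply Nat.eqb_neq; lia).
  replace (Nat.eqb t 0) with false by (symmetry; apply Nat.eqb_neq; lia).
  simpl. rewrite andb_false_r. lra.
Qed.

Lemma gcoef_0_0 (k : nat) : (1 <= k)%nat -> gcoef k 0 0 = 1.
Proof.
  intros H. unfold gcoef, multinom3. simpl. rewrite !Nat.sub_0_r.
  pose proof (INR_fact_lt_0 k). field. lra.
Qed.

Lemma peval_trinomial (k : nat) (x y : R) :
  peval (fun s t => if (s + t <=? k)%nat then multinom3 s t (k - s - t) else 0) k x y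
  = (1 + x + y) ^ k.
Proof.
  unfold peval. replace (1 + x + y) with (x + (1 + y)) by ring. rewrite binomial.
  apply sum_eq. intros s Hs.
  rewrite (sum_ext_zero _ (k - s)).
  2:{ intros t Ht. replace (s + t <=? k)%nat with false by (symmetry; apply Nat.leb_gt; lia). ring. }
  2: lia.
  replace (1 + y) with (y + 1) by ring. rewrite binomial, scal_sum.
  apply sum_eq. intros t Ht.
  replace (s + t <=? k)%nat with true by (symmetry; apply Nat.leb_le; lia).
  rewrite <- binom_mult_multinom3 by lia. rewrite pow1. ring.
Qed.

Lemma peval_ky (k : nat) (x y : R) : (1 <= k)%nat ->
  peval (fun s t => if (Nat.eqb s 0 && Nat.eqb t 1)%bool then INR k else 0) k x y = INR k * y.
Proof.
  intros Hk. unfold peval.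
  rewrite (sum_single _ 0%nat) by (lia || (intros s Hs; apply sum_eq_R0; intros t _;
     replace (Nat.eqb s 0) with false by (symmetry; apply Nat.eqb_neq; lia); simpl; ring)).
  rewrite (sum_single _ 1%nat) by (lia || (intros t Ht;
     replace (Nat.eqb t 1) with false by (symmetry; apply Nat.eqb_neq; lia); simpl; ring)).
  simpl. ring.
Qed.

Lemma peval_binomial_minus_1 (k : nat) (x y : R) :
  peval (fun s t => if (Nat.eqb t 0 && (1 <=? s)%nat && (s <=? k)%nat)%bool
     then INR (fact k) / (INR (fact s) * INR (fact (k - s))) else 0) k x y
  = (1 + x) ^ k - 1.
Proof.
  unfold peval.
  transitivity (sum_f_R0 (fun s => C k s * x ^ s * 1 ^ (k - s) - (if Nat.eqb s 0 then 1 else 0)) k).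
  - apply sum_eq. intros s Hs.
    rewrite (sum_single _ 0%nat) by (lia || (intros t Ht;
       replace (Nat.eqb t 0) with false by (symmetry; apply Nat.eqb_neq; lia); simpl; ring)).
    simpl Nat.eqb. rewrite andb_true_l.
    replace (s <=? k)%nat with true by (symmetry; apply Nat.leb_le; lia).
    rewrite pow1. unfold C. destruct s as [|s'].
    + simpl. rewrite Nat.sub_0_r. pose proof (INR_fact_lt_0 k). field. lra.
    + simpl. ring.
  - rewrite minus_sum, <- binomial.
    rewrite (sum_single _ 0%nat) by (lia || (intros t Ht;
       replace (Nat.eqb t 0) with false by (symmetry; apply Nat.eqb_neq; lia); reflexivity)).
    simpl. replace (x + 1) with (1 + x) by ring. ring.
Qed.

Definition Gval (k : nat) (x y : R) : R := 1 + (1 + x + y) ^ k - INR k * y - (1 + x) ^ k.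

Lemma peval_gcoef (k : nat) (x y : R) : (1 <= k)%nat -> peval (gcoef k) k x y = Gval k x y.
Proof.
  intros Hk. unfold Gval.
  replace (1 + (1 + x + y) ^ k - INR k * y - (1 + x) ^ k)
    with ((1 + x + y) ^ k - INR k * y - ((1 + x) ^ k - 1)) by ring.
  rewrite <- peval_trinomial, <- (peval_ky k x y Hk), <- (peval_binomial_minus_1 k x y).
  unfold peval, gcoef. rewrite <- !minus_sum. apply sum_eq. intros s _.
  rewrite <- !minus_sum. apply sum_eq. intros t _. ring.
Qed.

(* G_k(x,y) >= 1 for x, y > 0: it is at least the constant coefficient. *)
Lemma Gval_ge_1 (k : nat) (x y : R) : (1 <= k)%nat -> 0 < x -> 0 < y -> 1 <= Gval k x y.
Proof.
  intros Hk hx hy. rewrite <- peval_gcoef by exact Hk.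
  pose proof (pcoef_bound (gcoef k) k (fun s t => gcoef_nonneg k s t Hk)
    (gcoef_vanish_s k) (fun s t => gcoef_vanish_t k s t Hk) x y 1 0 0 hx hy) as Hb.
  simpl in Hb. rewrite gcoef_0_0 in Hb by exact Hk. lra.
Qed.

Lemma ln_le_sub_1 (z : R) : 0 < z -> ln z <= z - 1.
Proof. intros H. pose proof (exp_ineq1_le (ln z)) as He. rewrite exp_ln in He by exact H. lra. Qed.

Lemma ln_div (u v : R) : 0 < u -> 0 < v -> ln (u / v) = ln u - ln v.
Proof.
  intros Hu Hv. unfold Rdiv. rewrite ln_mult, ln_Rinv; try lra.
  apply Rinv_0_lt_compat; lra.
Qed.

Lemma ln_diff_le (u v : R) : 0 < u -> 0 < v -> ln v - ln u <= (v - u) / u.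
Proof.
  intros Hu Hv. rewrite <- ln_div by lra.
  replace ((v - u) / u) with (v / u - 1) by (field; lra).
  apply ln_le_sub_1, Rdiv_lt_0_compat; lra.
Qed.

Lemma ln_le_mono (a b : R) : 0 < a -> a <= b -> ln a <= ln b.
Proof. intros Ha [H|H]; [left; apply ln_increasing; lra|rewrite H; lra]. Qed.

(* The function r |-> r ln r (with value 0 at 0, since 0 * ln 0 = 0). *)
Definition xlnx (r : R) : R := r * ln r.

Lemma xlnx_scale (j r : R) : 0 <= j -> 0 <= r -> xlnx (j * r) = j * r * ln j + j * xlnx r.
Proof.
  unfold xlnx. intros [Hj|Hj] [Hr|Hr]; subst; try ring.
  rewrite ln_mult by lra. ring.
Qed.

Lemma xlnx_div (a n : R) : 0 <= a -> 0 < n -> xlnx (a / n) = (xlnx a - a * ln n) / n.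
Proof.
  unfold xlnx. intros [Ha|Ha] Hn.
  - rewrite ln_div by lra. field. lra.
  - subst. unfold Rdiv. rewrite !Rmult_0_l. field. lra.
Qed.

Lemma ln_fact_S (m : nat) : ln (INR (fact (S m))) = ln (INR m + 1) + ln (INR (fact m)).
Proof.
  rewrite fact_simpl, mult_INR, S_INR. apply ln_mult.
  - pose proof (pos_INR m); lra.
  - apply INR_fact_lt_0.
Qed.

(* m ln (m+1) <= m ln m + 1, from ln (1 + 1/m) <= 1/m. *)
Lemma xln_succ_le (m : nat) : INR m * ln (INR m + 1) <= xlnx (INR m) + 1.
Proof.
  unfold xlnx. destruct m as [|m']; [simpl; lra|].
  assert (H : 0 < INR (S m')) by (apply lt_0_INR; lia).
  pose proof (ln_diff_le (INR (S m')) (INR (S m') + 1) H ltac:(lra)) as Hd.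
  replace ((INR (S m') + 1 - INR (S m')) / INR (S m')) with (/ INR (S m')) in Hd by (field; lra).
  apply Rmult_le_compat_l with (r := INR (S m')) in Hd; [|lra].
  rewrite Rmult_minus_distr_l, Rinv_r in Hd by lra. lra.
Qed.

Lemma lnfact_lower (m : nat) : xlnx (INR m) - INR m <= ln (INR (fact m)).
Proof.
  induction m as [|m IH].
  - unfold xlnx. simpl. rewrite ln_1. lra.
  - rewrite ln_fact_S. pose proof (xln_succ_le m). unfold xlnx in *. rewrite S_INR. lra.
Qed.

Lemma lnfact_upper (m : nat) :
  ln (INR (fact m)) <= xlnx (INR m) - INR m + ln (INR m + 1) + 1.
Proof.
  assert (Hup : ln (INR (fact m)) <= (INR m + 1) * ln (INR m + 1) - INR m).
  { induction m as [|m IH].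
    - simpl. rewrite Rplus_0_l, ln_1. lra.
    - rewrite ln_fact_S, S_INR. pose proof (pos_INR m).
      pose proof (ln_diff_le (INR m + 1 + 1) (INR m + 1) ltac:(lra) ltac:(lra)) as Hd.
      replace ((INR m + 1 - (INR m + 1 + 1)) / (INR m + 1 + 1))
        with (- / (INR m + 1 + 1)) in Hd by (field; lra).
      apply Rmult_le_compat_l with (r := INR m + 1 + 1) in Hd; [|lra].
      replace ((INR m + 1 + 1) * - / (INR m + 1 + 1)) with (-1) in Hd by (field; lra).
      lra. }
  pose proof (xln_succ_le m). lra.
Qed.

(* The "entropy count" n ln n - a ln a - b ln b - c ln c, with n = a + b + c:
   the exponential growth of the multinomial coefficient. *)
Definition entropy_count (a b c : nat) : R :=
  xlnx (INR (a + b + c)) - xlnx (INR a) - xlnx (INR b) - xlnx (INR c).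

Lemma ln_multinom3 (a b c : nat) : ln (multinom3 a b c) =
  ln (INR (fact (a + b + c))) - ln (INR (fact a)) - ln (INR (fact b)) - ln (INR (fact c)).
Proof.
  unfold multinom3. pose proof (INR_fact_lt_0 (a + b + c)). pose proof (INR_fact_lt_0 a).
  pose proof (INR_fact_lt_0 b). pose proof (INR_fact_lt_0 c).
  unfold Rdiv. rewrite ln_mult, ln_Rinv, !ln_mult; try lra;
    repeat apply Rmult_lt_0_compat; try lra.
  apply Rinv_0_lt_compat. repeat apply Rmult_lt_0_compat; lra.
Qed.

Lemma ln_multinom3_upper (a b c : nat) :
  ln (multinom3 a b c) <= entropy_count a b c + ln (INR (a + b + c) + 1) + 1.
Proof.
  rewrite ln_multinom3. unfold entropy_count.
  pose proof (lnfact_upper (a + b + c)). pose proof (lnfact_lower a).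
  pose proof (lnfact_lower b). pose proof (lnfact_lower c).
  rewrite !plus_INR in *. lra.
Qed.

Lemma ln_multinom3_lower (a b c : nat) :
  entropy_count a b c - 3 * (ln (INR (a + b + c) + 1) + 1) <= ln (multinom3 a b c).
Proof.
  rewrite ln_multinom3. unfold entropy_count.
  assert (Hle : forall t, (t <= a + b + c)%nat -> ln (INR t + 1) <= ln (INR (a + b + c) + 1)).
  { intros t Ht. apply le_INR in Ht. pose proof (pos_INR t). apply ln_le_mono; lra. }
  pose proof (lnfact_lower (a + b + c)). pose proof (lnfact_upper a).
  pose proof (lnfact_upper b). pose proof (lnfact_upper c).
  pose proof (Hle a ltac:(lia)). pose proof (Hle b ltac:(lia)). pose proof (Hle c ltac:(lia)).
  rewrite !plus_INR in *. lra.
Qed.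

Lemma entropy_count_scale (j a b c : nat) :
  entropy_count (j * a) (j * b) (j * c) = INR j * entropy_count a b c.
Proof.
  unfold entropy_count. rewrite <- !Nat.mul_add_distr_l, !mult_INR.
  pose proof (pos_INR j). pose proof (pos_INR a). pose proof (pos_INR b). pose proof (pos_INR c).
  pose proof (pos_INR (a + b + c)).
  rewrite !xlnx_scale by lra. rewrite !plus_INR. ring.
Qed.

Lemma entropy_count_hent (a b c : nat) : (0 < a + b + c)%nat ->
  entropy_count a b c = INR (a + b + c) *
    hent (INR a / INR (a + b + c)) (INR b / INR (a + b + c)) (INR c / INR (a + b + c)).
Proof.
  intros Hn. apply lt_INR in Hn. simpl in Hn.
  unfold entropy_count, hent. pose proof (pos_INR a). pose proof (pos_INR b). pose proof (pos_INR c).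
  replace (- (INR a / INR (a + b + c)) * ln (INR a / INR (a + b + c)))
    with (- xlnx (INR a / INR (a + b + c))) by (unfold xlnx; ring).
  replace (INR b / INR (a + b + c) * ln (INR b / INR (a + b + c)))
    with (xlnx (INR b / INR (a + b + c))) by (unfold xlnx; ring).
  replace (INR c / INR (a + b + c) * ln (INR c / INR (a + b + c)))
    with (xlnx (INR c / INR (a + b + c))) by (unfold xlnx; ring).
  rewrite !xlnx_div by lra. unfold xlnx at 1. rewrite !plus_INR in *. field. lra.
Qed.

Lemma ln_pcoef_gcoef_le (k m p q : nat) (x y : R) :
  (1 <= k)%nat -> 0 < x -> 0 < y -> 0 < pcoef (gcoef k) m p q ->
  ln (pcoef (gcoef k) m p q) <= INR m * ln (Gval k x y) - INR p * ln x - INR q * ln y.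
Proof.
  intros Hk hx hy Hpos.
  pose proof (pcoef_bound (gcoef k) k (fun s t => gcoef_nonneg k s t Hk)
    (gcoef_vanish_s k) (fun s t => gcoef_vanish_t k s t Hk) x y m p q hx hy) as Hb.
  rewrite peval_gcoef in Hb by exact Hk.
  pose proof (Gval_ge_1 k x y Hk hx hy) as HG.
  assert (Hpx : 0 < x ^ p) by (apply pow_lt; lra).
  assert (Hpy : 0 < y ^ q) by (apply pow_lt; lra).
  apply ln_le_mono in Hb; [|repeat apply Rmult_lt_0_compat; lra].
  rewrite !ln_mult, !ln_pow in Hb; try lra; apply Rmult_lt_0_compat; lra.
Qed.

Lemma INR_div_mul (n j k : nat) : (1 <= k)%nat -> Nat.divide k n ->
  INR (n * j / k) = INR n * INR j / INR k.
Proof.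
  intros Hk [q ->]. assert (HkR : 0 < INR k) by (apply lt_0_INR; lia).
  replace (q * k * j)%nat with (q * j * k)%nat by ring.
  rewrite Nat.div_mul by lia. rewrite !mult_INR. field. lra.
Qed.

(* The limiting exponent apart from the G_k term, as a function of the
   proportions p, q of correct and incorrect variable nodes. *)
Definition main_rate (j : nat) (p q x y : R) : R :=
  (1 - INR j) * hent p q (1 - p - q) - INR j * p * ln x - INR j * q * ln y.

(* The error coming from the Stirling bounds, of order ln n / n. *)
Definition err_rate (r n : R) : R := 4 * (ln (r * n + 1) + 1) / n.

Lemma ln_Enjk_le (n j k a b : nat) (x y : R) :
  (1 <= j)%nat -> (1 <= k)%nat -> Nat.divide k n -> (a + b <= n)%nat -> (0 < n)%nat ->
  0 < x -> 0 < y -> 0 < Enjk n j k a b ->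
  ln (Enjk n j k a b) / INR n <=
    INR j / INR k * ln (Gval k x y) + main_rate j (INR a / INR n) (INR b / INR n) x y
    + err_rate (INR j) (INR n).
Proof.
  intros hj hk hdiv hab hn hx hy HE.
  set (c := (n - a - b)%nat).
  assert (Habc : (a + b + c = n)%nat) by (unfold c; lia).
  assert (HnR : 0 < INR n) by (apply lt_0_INR; lia).
  assert (HjR : 1 <= INR j) by (apply (le_INR 1); lia).
  pose proof (multinom3_pos a b c) as HM1.
  pose proof (multinom3_pos (j * a) (j * b) (j * c)) as HM2.
  assert (HEdef : Enjk n j k a b = multinom3 a b c * Snjk n j k a b
                    / multinom3 (j * a) (j * b) (j * c)) by reflexivity.
  assert (HS : 0 < Snjk n j k a b).
  { destruct (pcoef_nonneg (gcoef k) (fun s t => gcoef_nonneg k s t hk)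
      (n * j / k) (j * a) (j * b)) as [H|H]; [exact H|].
    rewrite HEdef in HE. unfold Snjk in HE. rewrite <- H in HE. lra. }
  pose proof (ln_multinom3_upper a b c) as Hup. rewrite Habc in Hup.
  pose proof (ln_multinom3_lower (j * a) (j * b) (j * c)) as Hlow.
  replace (j * a + j * b + j * c)%nat with (j * n)%nat in Hlow by (rewrite <- Habc; ring).
  rewrite entropy_count_scale, mult_INR in Hlow.
  pose proof (ln_pcoef_gcoef_le k (n * j / k) (j * a) (j * b) x y hk hx hy HS) as HlnS.
  change (pcoef (gcoef k) (n * j / k) (j * a) (j * b)) with (Snjk n j k a b) in HlnS.
  rewrite INR_div_mul in HlnS by assumption. rewrite !mult_INR in HlnS.
  assert (Hln1 : ln (INR n + 1) <= ln (INR j * INR n + 1))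
    by (apply ln_le_mono; nra).
  pose proof (entropy_count_hent a b c ltac:(lia)) as Hent. rewrite Habc in Hent.
  replace (INR c / INR n) with (1 - INR a / INR n - INR b / INR n) in Hent
    by (unfold c; rewrite !minus_INR by lia; field; lra).
  assert (HlnE : ln (Enjk n j k a b) = ln (multinom3 a b c) + ln (Snjk n j k a b)
                   - ln (multinom3 (j * a) (j * b) (j * c))).
  { assert (HM1S : 0 < multinom3 a b c * Snjk n j k a b) by (apply Rmult_lt_0_compat; lra).
    rewrite HEdef, ln_div, ln_mult by lra. ring. }
  apply Rmult_le_reg_l with (INR n); [exact HnR|].
  replace (INR n * (ln (Enjk n j k a b) / INR n)) with (ln (Enjk n j k a b)) by (field; lra).
  replace (INR n * (INR j / INR k * ln (Gval k x y) + main_rate j (INR a / INR n) (INR b / INR n) x y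
             + err_rate (INR j) (INR n)))
    with ((1 - INR j) * entropy_count a b c + INR n * INR j / INR k * ln (Gval k x y)
          - INR j * INR a * ln x - INR j * INR b * ln y + 4 * (ln (INR j * INR n + 1) + 1))
    by (unfold main_rate, err_rate; rewrite Hent; field; split; apply not_0_INR; lia).
  lra.
Qed.

Lemma Enjk_nonneg (n j k a b : nat) : (1 <= k)%nat -> 0 <= Enjk n j k a b.
Proof.
  intros hk. unfold Enjk.
  pose proof (multinom3_pos a b (n - a - b)).
  pose proof (multinom3_pos (j * a) (j * b) (j * (n - a - b))).
  pose proof (pcoef_nonneg (gcoef k) (fun s t => gcoef_nonneg k s t hk)
    (n * j / k) (j * a) (j * b)).
  apply Rmult_le_pos; [apply Rmult_le_pos; unfold Snjk; lra|].
  left. apply Rinv_0_lt_compat. lra.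
Qed.

Lemma cv_const (c : R) : Un_cv (fun _ => c) c.
Proof. intros eps He. exists 0%nat. intros. unfold Rdist. rewrite Rminus_diag, Rabs_R0. lra. Qed.

Lemma cv_ext (u v : nat -> R) (l l' : R) :
  (forall i, u i = v i) -> l = l' -> Un_cv u l -> Un_cv v l'.
Proof. intros H -> Hu eps He. destruct (Hu eps He) as [I HI]. exists I. intros n Hn. rewrite <- H. auto. Qed.

Lemma cv_xlnx (u : nat -> R) (l : R) : 0 < l -> Un_cv u l -> Un_cv (fun i => xlnx (u i)) (xlnx l).
Proof.
  intros Hl Hu. apply (CV_mult u (fun i => ln (u i))); [exact Hu|].
  apply continuity_seq; [|exact Hu].
  apply derivable_continuous_pt. exists (/ l). apply derivable_pt_lim_ln. exact Hl.
Qed.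

Lemma hent_xlnx (p q r : R) : hent p q r = - xlnx p - xlnx q - xlnx r.
Proof. unfold hent, xlnx. ring. Qed.

Lemma main_rate_cv (j : nat) (p q x y : R) (P Q : nat -> R) :
  0 < p -> 0 < q -> p + q < 1 -> Un_cv P p -> Un_cv Q q ->
  Un_cv (fun i => main_rate j (P i) (Q i) x y) (main_rate j p q x y).
Proof.
  intros Hp Hq Hpq HP HQ.
  assert (HR : Un_cv (fun i => 1 - P i - Q i) (1 - p - q)).
  { apply (CV_minus (fun i => 1 - P i) Q); [|exact HQ].
    apply (CV_minus (fun _ => 1) P); [apply cv_const|exact HP]. }
  assert (Hh : Un_cv (fun i => - xlnx (P i) - xlnx (Q i) - xlnx (1 - P i - Q i))
                     (- xlnx p - xlnx q - xlnx (1 - p - q))).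
  { apply CV_minus; [apply CV_minus|].
    - apply (CV_opp (fun i => xlnx (P i))). apply cv_xlnx; assumption.
    - apply cv_xlnx; assumption.
    - apply (cv_xlnx (fun i => 1 - P i - Q i)); [lra|exact HR]. }
  apply (cv_ext (fun i => (1 - INR j) * (- xlnx (P i) - xlnx (Q i) - xlnx (1 - P i - Q i))
                           - (INR j * ln x) * P i - (INR j * ln y) * Q i)
                _ ((1 - INR j) * (- xlnx p - xlnx q - xlnx (1 - p - q))
                   - (INR j * ln x) * p - (INR j * ln y) * q)).
  { intro i. unfold main_rate. rewrite hent_xlnx. ring. }
  { unfold main_rate. rewrite hent_xlnx. ring. }
  apply CV_minus; [apply CV_minus|].
  - apply (CV_mult (fun _ => 1 - INR j)); [apply cv_const|exact Hh].
  - apply (CV_mult (fun _ => INR j * ln x)); [apply cv_const|exact HP].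
  - apply (CV_mult (fun _ => INR j * ln y)); [apply cv_const|exact HQ].
Qed.

Lemma ln_le_linear (d z : R) : 0 < d -> 0 < z -> ln z <= d * z - ln d - 1.
Proof.
  intros Hd Hz. pose proof (ln_le_sub_1 (d * z) ltac:(nra)) as H.
  rewrite ln_mult in H by lra. lra.
Qed.

Lemma err_rate_small (r eps : R) : 0 <= r -> 0 < eps ->
  exists M : R, forall n, M <= n -> err_rate r n <= eps.
Proof.
  intros Hr He.
  set (d := eps / (8 * (r + 1))).
  assert (Hd : 0 < d) by (unfold d; apply Rdiv_lt_0_compat; lra).
  assert (Hdr : 4 * d * r <= eps / 2).
  { unfold d. apply Rmult_le_reg_r with (8 * (r + 1)); [lra|].
    replace (4 * (eps / (8 * (r + 1))) * r * (8 * (r + 1))) with (4 * eps * r) by (field; lra).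
    nra. }
  set (C := Rmax 0 (4 * d - 4 * ln d)).
  exists (Rmax 1 (2 * C / eps)). intros n Hn.
  pose proof (Rmax_l 1 (2 * C / eps)) as Hn1. pose proof (Rmax_r 1 (2 * C / eps)) as HnC.
  assert (HCn : C <= eps / 2 * n).
  { apply Rmult_le_reg_r with (2 / eps); [apply Rdiv_lt_0_compat; lra|].
    replace (eps / 2 * n * (2 / eps)) with n by (field; lra).
    replace (C * (2 / eps)) with (2 * C / eps) by (field; lra). lra. }
  pose proof (ln_le_linear d (r * n + 1) Hd ltac:(nra)) as Hln.
  pose proof (Rmax_r 0 (4 * d - 4 * ln d)) as HC. fold C in HC.
  unfold err_rate. apply Rmult_le_reg_r with n; [lra|].
  replace (4 * (ln (r * n + 1) + 1) / n * n) with (4 * (ln (r * n + 1) + 1)) by (field; lra).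
  nra.
Qed.

Lemma eventually_ge (N : nat -> nat) (M : R) :
  (forall m : nat, exists I, forall i, (I <= i)%nat -> (m <= N i)%nat) ->
  exists I, forall i, (I <= i)%nat -> M <= INR (N i).
Proof.
  intros HN. destruct (INR_unbounded M) as [m Hm]. destruct (HN m) as [I HI].
  exists I. intros i Hi. specialize (HI i Hi). apply le_INR in HI. lra.
Qed.

Lemma target_split (j k : nat) (alpha beta x y : R) :
  (1 <= k)%nat -> 0 < x -> 0 < y ->
  INR j / INR k * ln ((1 + (1 + x + y) ^ k - INR k * y - (1 + x) ^ k)
                      / (Rpower x (INR k * alpha) * Rpower y (INR k * beta)))
  + (1 - INR j) * hent alpha beta (1 - alpha - beta)
  = INR j / INR k * ln (Gval k x y) + main_rate j alpha beta x y.
Proof.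
  intros hk hx hy. fold (Gval k x y).
  assert (HG : 1 <= Gval k x y) by (apply Gval_ge_1; assumption).
  assert (Hk : 0 < INR k) by (apply lt_0_INR; lia).
  assert (Px : 0 < Rpower x (INR k * alpha)) by apply exp_pos.
  assert (Py : 0 < Rpower y (INR k * beta)) by apply exp_pos.
  rewrite ln_div, ln_mult, !ln_Rpower by (try apply Rmult_lt_0_compat; lra).
  unfold main_rate. field. lra.
Qed.

Theorem theorem6 (j k : nat) (hj : (2 <= j)%nat) (hjk : (j < k)%nat)
  (alpha beta : R) (ha : 0 < alpha) (hb : 0 < beta) (hab : alpha + beta < 1)
  (N A B : nat -> nat)
  (hNk : forall i, Nat.divide k (N i))
  (hNinf : forall M : nat, exists I, forall i, (I <= i)%nat -> (M <= N i)%nat)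
  (hAB : forall i, (A i + B i <= N i)%nat)
  (hA : Un_cv (fun i => INR (A i) / INR (N i)) alpha)
  (hB : Un_cv (fun i => INR (B i) / INR (N i)) beta)
  (x y : R) (hx : 0 < x) (hy : 0 < y) :
  let L := INR j / INR k *
             ln ((1 + (1 + x + y) ^ k - INR k * y - (1 + x) ^ k)
                 / (Rpower x (INR k * alpha) * Rpower y (INR k * beta)))
           + (1 - INR j) * hent alpha beta (1 - alpha - beta) in
  forall eps : R, 0 < eps -> exists I : nat, forall i, (I <= i)%nat ->
    Enjk (N i) j k (A i) (B i) = 0 \/
    ln (Enjk (N i) j k (A i) (B i)) / INR (N i) <= L + eps.
Proof.
  intros L eps He.
  assert (hj1 : (1 <= j)%nat) by lia. assert (hk1 : (1 <= k)%nat) by lia.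
  assert (HL : L = INR j / INR k * ln (Gval k x y) + main_rate j alpha beta x y)
    by (apply target_split; assumption).
  destruct (main_rate_cv j alpha beta x y _ _ ha hb hab hA hB (eps / 2) ltac:(lra))
    as [I1 HI1].
  destruct (err_rate_small (INR j) (eps / 2) (pos_INR j) ltac:(lra)) as [M HM].
  destruct (eventually_ge N (Rmax M 1) hNinf) as [I2 HI2].
  exists (Nat.max I1 I2). intros i Hi.
  specialize (HI1 i ltac:(lia)). specialize (HI2 i ltac:(lia)).
  pose proof (Rmax_l M 1). pose proof (Rmax_r M 1).
  assert (Hn : (0 < N i)%nat) by (apply INR_lt; simpl; lra).
  destruct (Enjk_nonneg (N i) j k (A i) (B i) hk1) as [HE|HE]; [right|left; auto].
  pose proof (ln_Enjk_le (N i) j k (A i) (B i) x y hj1 hk1 (hNk i) (hAB i) Hn hx hy HE).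
  pose proof (HM (INR (N i)) ltac:(lra)).
  unfold Rdist in HI1. apply Rabs_def2 in HI1. lra.
Qed.
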